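(* Let $I\subset\mathbb{R}$ be an open interval, let $\bm{a}:I\to\mathbb{R}^2_1$ be a frontal with Gauss mapping $\bm{\nu}:I\to H^1$ (or $S^1_1$), and let $r:I\to\mathbb{R}^+$ be a smooth positive function. Suppose the pseudo-circle family $C_{(\bm{a}(t),\pm r(t))}$ creates an envelope $f:I\to\mathbb{R}^2_1$, and write $f(t)=\bm{a}(t)+r(t)\tilde{\bm{\nu}}(t)$ with $\tilde{\bm{\nu}}:I\to S^1_1$ (for the family with $+r$) or $\tilde{\bm{\nu}}:I\to H^1$ (for the family with $-r$). Then: (1) If $\epsilon_{\tilde{\bm{\nu}}}\cdot\epsilon_{\bm{\mu}}=1$, then $\tilde{\bm{\nu}}(t)=\cosh\theta(t)\bm{\mu}(t)\pm\sinh\theta(t)\bm{\nu}(t)$ or $\tilde{\bm{\nu}}(t)=-\cosh\theta(t)\bm{\mu}(t)\pm\sinh\theta(t)\bm{\nu}(t)$, where $\theta:I\to\mathbb{R}$ is a function satisfying $\frac{dr}{dt}(t)+\beta(t)\cosh\theta(t)=0$ or $\frac{dr}{dt}(t)-\beta(t)\cosh\theta(t)=0$ for all $t\in I$. (2) If $\epsilon_{\tilde{\bm{\nu}}}\cdot\epsilon_{\bm{\mu}}=-1$, then $\tilde{\bm{\nu}}(t)=\sinh\theta(t)\bm{\mu}(t)\pm\cosh\theta(t)\bm{\nu}(t)$, where $\theta:I\to\mathbb{R}$ is a function satisfying $\frac{dr}{dt}(t)-\beta(t)\sinh\theta(t)=0$ for all $t\in I$.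
   Context: All objects are $C^\infty$. The Minkowski plane $\mathbb{R}^2_1$ is $\mathbb{R}^2$ with $\langle\bm{x},\bm{y}\rangle=-x_1y_1+x_2y_2$; $S^1_1=\{\bm{x}:\langle\bm{x},\bm{x}\rangle=1\}$, $H^1=\{\bm{x}:\langle\bm{x},\bm{x}\rangle=-1\}$. For non-lightlike $\bm{x}$, $\epsilon_{\bm{x}}=1$ if $\bm{x}$ is spacelike ($\langle\bm{x},\bm{x}\rangle>0$) and $-1$ if timelike ($\langle\bm{x},\bm{x}\rangle<0$); for a map into $S^1_1$ or $H^1$ this sign is constant. A smooth $\bm{a}:I\to\mathbb{R}^2_1$ is a spacelike (resp. timelike) frontal if there is smooth $\bm{\nu}:I\to H^1$ (resp. $S^1_1$), the Gauss mapping, with $\langle\frac{d\bm{a}}{dt},\bm{\nu}\rangle=0$. $\bm{\mu}:I\to S^1_1$ (resp. $H^1$) is a smooth unit field with $\langle\bm{\mu},\bm{\nu}\rangle=0$, and $\frac{d\bm{a}}{dt}=\beta\bm{\mu}$ with $\beta(t)=\epsilon_{\bm{\mu}}\langle\bm{\mu}(t),\frac{d\bm{a}}{dt}(t)\rangle$. $C_{(\bm{a}(t),\pm r(t))}=\{\bm{x}:\langle\bm{x}-\bm{a}(t),\bm{x}-\bm{a}(t)\rangle=\pm r(t)^2\}$. An envelope of $C_{(\bm{a}(t),\pm r(t))}$ is a smooth $f:I\to\mathbb{R}^2_1$ with $f(t)\in C_{(\bm{a}(t),\pm r(t))}$ and $\langle\frac{df}{dt}(t),f(t)-\bm{a}(t)\rangle=0$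 for all $t$. *)

From Stdlib Require Export Reals.
From Coquelicot Require Export Coquelicot.
Open Scope R_scope.

(* The Minkowski plane R^2_1 is modelled as R * R. *)
Definition vec := (R * R)%type.

Definition mink (x y : vec) : R := - (fst x * fst y) + snd x * snd y.

Definition vadd (x y : vec) : vec := (fst x + fst y, snd x + snd y).
Definition vsub (x y : vec) : vec := (fst x - fst y, snd x - snd y).
Definition vscal (c : R) (x : vec) : vec := (c * fst x, c * snd x).

(* epsilon_x: 1 if spacelike, -1 otherwise (used only for non-lightlike x) *)
Definition causal_sign (x : vec) : R :=
  if Rlt_dec 0 (mink x x) then 1 else -1.

Definition ointerval (lo hi : Rbar) (t : R) : Prop :=
  Rbar_lt lo t /\ Rbar_lt t hi.

Definition smooth_on (I : R -> Prop) (g : R -> R) : Prop :=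
  forall (n : nat) (t : R), I t -> ex_derive_n g n t.

Definition smooth_vec_on (I : R -> Prop) (g : R -> vec) : Prop :=
  smooth_on I (fun t => fst (g t)) /\ smooth_on I (fun t => snd (g t)).

Definition vderiv (g : R -> vec) (t : R) : vec :=
  (Derive (fun s => fst (g s)) t, Derive (fun s => snd (g s)) t).

Definition beta (a mu : R -> vec) (t : R) : R :=
  causal_sign (mu t) * mink (mu t) (vderiv a t).

(* Write nut = X mu + Y nu in the Lorentz frame (mu, nu), where <mu,mu> = e = -<nu,nu>;
   then e (X^2 - Y^2) = sigma.  Differentiating <f - a, f - a> = sigma r^2 and using the
   envelope condition <f', f - a> = 0 gives sigma r' = -<a', nut> = -e X beta.  If sigma = e
   then X^2 - Y^2 = 1, and X, continuous and never zero on the interval, has a constant sign s,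
   so (X, Y) = (s cosh theta, sinh theta) with theta = ln (s X + Y).  If sigma = -e the roles
   of X and Y are exchanged. *)

From Stdlib Require Import Reals Lra Psatz Classical.
From Coquelicot Require Import Coquelicot.
Open Scope R_scope.

Definition vdet (m n : vec) : R := fst m * snd n - snd m * fst n.

Lemma mink_sym x y : mink x y = mink y x.
Proof. unfold mink; ring. Qed.

Lemma mink_vadd_l x y m n w :
  mink (vadd (vscal x m) (vscal y n)) w = x * mink m w + y * mink n w.
Proof. unfold mink, vadd, vscal; simpl; ring. Qed.

Lemma vdet_sq_mink m n : vdet m n ^ 2 = mink m n ^ 2 - mink m m * mink n n.
Proof. unfold vdet, mink; ring. Qed.

Lemma mink_frame_ext m n v w : vdet m n <> 0 ->
  mink v m = mink w m -> mink v n = mink w n -> v = w.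
Proof.
  destruct m as [m1 m2], n as [n1 n2], v as [v1 v2], w as [w1 w2].
  unfold vdet, mink; simpl; intros Hdet Hm Hn.
  assert (E1 : (v1 - w1) * (m1 * n2 - m2 * n1) = 0).
  { transitivity (m2 * ((- (v1 * n1) + v2 * n2) - (- (w1 * n1) + w2 * n2))
                  - n2 * ((- (v1 * m1) + v2 * m2) - (- (w1 * m1) + w2 * m2)));
      [ring | rewrite Hm, Hn; ring]. }
  assert (E2 : (v2 - w2) * (m1 * n2 - m2 * n1) = 0).
  { transitivity (m1 * ((- (v1 * n1) + v2 * n2) - (- (w1 * n1) + w2 * n2))
                  - n1 * ((- (v1 * m1) + v2 * m2) - (- (w1 * m1) + w2 * m2)));
      [ring | rewrite Hm, Hn; ring]. }
  apply Rmult_integral in E1; apply Rmult_integral in E2.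
  destruct E1, E2; try contradiction; f_equal; lra.
Qed.

Lemma lorentz_frame_decomp e m n v : (e = 1 \/ e = -1) ->
  mink m m = e -> mink n n = - e -> mink m n = 0 ->
  v = vadd (vscal (e * mink v m) m) (vscal (- e * mink v n) n).
Proof.
  intros He Hm Hn Hmn.
  assert (Hdet : vdet m n ^ 2 = 1)
    by (rewrite vdet_sq_mink, Hm, Hn, Hmn; destruct He; subst; ring).
  apply mink_frame_ext with m n; [intro H0; rewrite H0 in Hdet; lra | |];
    rewrite mink_vadd_l, ?(mink_sym n m), ?Hm, ?Hn, ?Hmn; destruct He; subst; ring.
Qed.

Lemma causal_sign_unit s x : (s = 1 \/ s = -1) -> mink x x = s -> causal_sign x = s.
Proof.
  unfold causal_sign; intros Hs ->.
  destruct (Rlt_dec 0 s); destruct Hs; subst; lra.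
Qed.

Lemma hyperbola_ln_param P Q : P ^ 2 - Q ^ 2 = 1 -> 0 < P ->
  cosh (ln (P + Q)) = P /\ sinh (ln (P + Q)) = Q.
Proof.
  intros H HP.
  assert (Hpos : 0 < P + Q) by nra.
  assert (Hinv : / (P + Q) = P - Q) by (field_simplify_eq; nra).
  unfold cosh, sinh; rewrite exp_Ropp, exp_ln, Hinv by exact Hpos.
  split; field.
Qed.

Lemma ointerval_inhabited lo hi : Rbar_lt lo hi -> exists t, ointerval lo hi t.
Proof.
  unfold ointerval; destruct lo as [l| |], hi as [h| |]; simpl; try tauto; intro H.
  - exists ((l + h) / 2); simpl; lra.
  - exists (l + 1); simpl; lra.
  - exists (h - 1); simpl; lra.
  - exists 0; simpl; tauto.
Qed.

Lemma ointerval_convex lo hi t0 t1 s :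
  ointerval lo hi t0 -> ointerval lo hi t1 -> t0 <= s <= t1 -> ointerval lo hi s.
Proof.
  intros [Hlo _] [_ Hhi] [H0 H1]; split.
  - apply Rbar_lt_le_trans with t0; [exact Hlo | exact H0].
  - apply Rbar_le_lt_trans with t1; [exact H1 | exact Hhi].
Qed.

Lemma ointerval_locally lo hi t : ointerval lo hi t -> locally t (ointerval lo hi).
Proof.
  intros [Hlo Hhi]; apply filter_and;
    [exact (open_Rbar_gt' t lo Hlo) | exact (open_Rbar_lt' t hi Hhi)].
Qed.

Lemma ointerval_IVT lo hi (g : R -> R) x y :
  (forall t, ointerval lo hi t -> continuity_pt g t) ->
  ointerval lo hi x -> ointerval lo hi y -> x < y -> g x < 0 -> 0 < g y ->
  exists z, ointerval lo hi z /\ g z = 0.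
Proof.
  intros Hg Ix Iy Hxy Hx Hy.
  assert (Hseg : forall s, x <= s <= y -> ointerval lo hi s) by eauto using ointerval_convex.
  destruct (Ranalysis5.IVT_interv g x y) as [z [Hz Hgz]]; auto.
  exists z; auto.
Qed.

Lemma ointerval_const_sign lo hi (g : R -> R) :
  (forall t, ointerval lo hi t -> continuity_pt g t) ->
  (forall t, ointerval lo hi t -> g t <> 0) ->
  exists s, (s = 1 \/ s = -1) /\ forall t, ointerval lo hi t -> 0 < s * g t.
Proof.
  intros Hg Hnz.
  assert (Hg' : forall t, ointerval lo hi t -> continuity_pt (fun u => - g u) t)
    by (intros; apply continuity_pt_opp; auto).
  assert (Hno_change : forall x y, ointerval lo hi x -> ointerval lo hi y ->
            0 < g x -> 0 < g y \/ g y = 0).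
  { intros x y Ix Iy Hx. destruct (Rtotal_order (g y) 0) as [Hy|[Hy|Hy]]; auto.
    exfalso; destruct (Rtotal_order x y) as [Hxy|[<-|Hxy]]; [| lra |].
    - destruct (ointerval_IVT lo hi (fun u => - g u) x y) as [z [Iz Hz]]; auto; try lra.
      apply (Hnz z Iz); lra.
    - destruct (ointerval_IVT lo hi g y x) as [z [Iz Hz]]; auto.
      exact (Hnz z Iz Hz). }
  destruct (classic (exists x, ointerval lo hi x /\ 0 < g x)) as [[x [Ix Hx]]|Hneg].
  - exists 1; split; [now left|]; intros t It.
    destruct (Hno_change x t Ix It Hx) as [H|H]; [lra | now destruct (Hnz t It)].
  - exists (-1); split; [now right|]; intros t It.
    destruct (Rtotal_order (g t) 0) as [H|[H|H]]; [lra | now destruct (Hnz t It) |].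
    exfalso; apply Hneg; exists t; split; assumption.
Qed.

Lemma ointerval_hyperbolic_angle lo hi (P Q : R -> R) :
  (forall t, ointerval lo hi t -> continuity_pt P t) ->
  (forall t, ointerval lo hi t -> P t ^ 2 - Q t ^ 2 = 1) ->
  exists (theta : R -> R) (s : R), (s = 1 \/ s = -1) /\
    forall t, ointerval lo hi t -> P t = s * cosh (theta t) /\ Q t = sinh (theta t).
Proof.
  intros HP Hhyp.
  destruct (ointerval_const_sign lo hi P HP) as [s [Hs Hpos]].
  { intros t It H0; specialize (Hhyp t It); rewrite H0 in Hhyp; nra. }
  exists (fun t => ln (s * P t + Q t)), s; split; [exact Hs|]; intros t It.
  destruct (hyperbola_ln_param (s * P t) (Q t)) as [-> ->]; auto.
  - rewrite <- (Hhyp t It); destruct Hs; subst; ring.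
  - split; [destruct Hs; subst; ring | reflexivity].
Qed.

Definition ex_vderive (g : R -> vec) (t : R) : Prop :=
  ex_derive (fun s => fst (g s)) t /\ ex_derive (fun s => snd (g s)) t.

Lemma smooth_on_ex_derive I g t : smooth_on I g -> I t -> ex_derive g t.
Proof. intros Hg It; exact (Hg 1%nat t It). Qed.

Lemma smooth_vec_on_ex_vderive I g t : smooth_vec_on I g -> I t -> ex_vderive g t.
Proof. intros [H1 H2] It; split; eapply smooth_on_ex_derive; eauto. Qed.

Lemma ex_vderive_vsub g h t : ex_vderive g t -> ex_vderive h t ->
  ex_vderive (fun s => vsub (g s) (h s)) t.
Proof.
  intros [G1 G2] [H1 H2];
    split; [exact (ex_derive_minus _ _ t G1 H1) | exact (ex_derive_minus _ _ t G2 H2)].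
Qed.

Lemma vderiv_vsub g h t : ex_vderive g t -> ex_vderive h t ->
  vderiv (fun s => vsub (g s) (h s)) t = vsub (vderiv g t) (vderiv h t).
Proof.
  intros [G1 G2] [H1 H2]; unfold vderiv, vsub; simpl; f_equal; apply Derive_minus; assumption.
Qed.

Lemma is_derive_mink g h t : ex_vderive g t -> ex_vderive h t ->
  is_derive (fun s => mink (g s) (h s)) t (mink (vderiv g t) (h t) + mink (g t) (vderiv h t)).
Proof.
  unfold ex_vderive, mink, vderiv.
  set (g1 := fun s => fst (g s)); set (g2 := fun s => snd (g s)).
  set (h1 := fun s => fst (h s)); set (h2 := fun s => snd (h s)).
  change (fun s => - (fst (g s) * fst (h s)) + snd (g s) * snd (h s))
    with (fun s => - (g1 s * h1 s) + g2 s * h2 s).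
  intros [G1 G2] [H1 H2]; simpl.
  auto_derive; [tauto | unfold g1, g2, h1, h2; simpl; ring].
Qed.

Lemma ex_derive_mink g h t : ex_vderive g t -> ex_vderive h t ->
  ex_derive (fun s => mink (g s) (h s)) t.
Proof. intros Hg Hh; eexists; apply is_derive_mink; assumption. Qed.

Lemma envelope_radius_derive (I : R -> Prop) (a f nut : R -> vec) (r : R -> R) sigma t :
  locally t I -> ex_vderive a t -> ex_vderive f t -> ex_derive r t -> 0 < r t ->
  (forall s, I s -> mink (vsub (f s) (a s)) (vsub (f s) (a s)) = sigma * r s ^ 2) ->
  mink (vderiv f t) (vsub (f t) (a t)) = 0 ->
  f t = vadd (a t) (vscal (r t) (nut t)) ->
  sigma * Derive r t = - mink (vderiv a t) (nut t).
Proof.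
  intros HI Ha Hf Hr Hrpos Hcircle Htangent Hnut.
  set (g := fun s => vsub (f s) (a s)).
  assert (Hg : ex_vderive g t) by (apply ex_vderive_vsub; assumption).
  assert (Hsq : is_derive (fun s => mink (g s) (g s)) t (sigma * (2 * r t * Derive r t))).
  { apply is_derive_ext_loc with (fun s => sigma * r s ^ 2).
    - apply filter_imp with I; [|exact HI]. intros s Is; symmetry; exact (Hcircle s Is).
    - auto_derive; [exact Hr | change (fun x => r x) with r; ring]. }
  apply is_derive_unique in Hsq.
  rewrite (is_derive_unique _ _ _ (is_derive_mink g g t Hg Hg)) in Hsq.
  unfold g in Hsq; rewrite vderiv_vsub in Hsq by assumption.
  rewrite Hnut in Hsq, Htangent; apply Rmult_eq_reg_l with (2 * r t); [|lra].
  revert Hsq Htangent; unfold mink, vsub, vadd, vscal; simpl; intros; nra.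
Qed.

Section PseudoCircleEnvelope.

Variables (lo hi : Rbar) (a nu mu f nut : R -> vec) (r : R -> R) (e sigma : R).

Local Notation I := (ointerval lo hi).

Hypothesis He : e = 1 \/ e = -1.
Hypothesis Ha : smooth_vec_on I a.
Hypothesis Hnu : smooth_vec_on I nu.
Hypothesis Hmu : smooth_vec_on I mu.
Hypothesis Hframe : forall t, I t -> mink (mu t) (mu t) = e /\ mink (nu t) (nu t) = - e.
Hypothesis Hfrontal : forall t, I t ->
  mink (vderiv a t) (nu t) = 0 /\ mink (mu t) (nu t) = 0.
Hypothesis Hr : smooth_on I r.
Hypothesis Hrpos : forall t, I t -> 0 < r t.
Hypothesis Hf : smooth_vec_on I f.
Hypothesis Henv : forall t, I t ->
  mink (vsub (f t) (a t)) (vsub (f t) (a t)) = sigma * r t ^ 2 /\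
  mink (vderiv f t) (vsub (f t) (a t)) = 0.
Hypothesis Hnut : forall t, I t ->
  f t = vadd (a t) (vscal (r t) (nut t)) /\ mink (nut t) (nut t) = sigma.

Definition mu_coord (t : R) : R := e * mink (nut t) (mu t).
Definition nu_coord (t : R) : R := - e * mink (nut t) (nu t).

Lemma nut_frame_decomp t : I t ->
  nut t = vadd (vscal (mu_coord t) (mu t)) (vscal (nu_coord t) (nu t)).
Proof.
  intros It; destruct (Hframe t It), (Hfrontal t It).
  apply lorentz_frame_decomp; assumption.
Qed.

Lemma nut_coord_norm t : I t -> e * (mu_coord t ^ 2 - nu_coord t ^ 2) = sigma.
Proof.
  intros It; rewrite <- (proj2 (Hnut t It)).
  rewrite (nut_frame_decomp t It) at 1.
  rewrite mink_vadd_l, (mink_sym (mu t)), (mink_sym (nu t)); unfold mu_coord, nu_coord.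
  destruct He as [-> | ->]; ring.
Qed.

Lemma radius_derive_mu_coord t : I t -> sigma * Derive r t = - e * mu_coord t * beta a mu t.
Proof.
  intros It.
  rewrite (envelope_radius_derive I a f nut r sigma t (ointerval_locally _ _ _ It)
    (smooth_vec_on_ex_vderive _ _ _ Ha It) (smooth_vec_on_ex_vderive _ _ _ Hf It)
    (smooth_on_ex_derive _ _ _ Hr It) (Hrpos t It) (fun s Is => proj1 (Henv s Is))
    (proj2 (Henv t It)) (proj1 (Hnut t It))).
  unfold beta; rewrite (causal_sign_unit e (mu t)) by (auto; apply Hframe; assumption).
  rewrite (nut_frame_decomp t It), mink_sym, mink_vadd_l, (mink_sym (nu t)).
  rewrite (proj1 (Hfrontal t It)).
  destruct He as [-> | ->]; ring.
Qed.

Lemma nut_ex_vderive t : I t -> ex_vderive nut t.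
Proof.
  intros It.
  assert (Hdiff : ex_vderive (fun s => vsub (f s) (a s)) t)
    by (apply ex_vderive_vsub; eapply smooth_vec_on_ex_vderive; eauto).
  assert (Hr' : ex_derive r t) by (eapply smooth_on_ex_derive; eauto).
  pose proof (Hrpos t It) as Hrt.
  assert (Hloc : locally t (fun s => nut s = vscal (/ r s) (vsub (f s) (a s)))).
  { apply filter_imp with I; [|apply ointerval_locally; exact It].
    intros s Is; rewrite (proj1 (Hnut s Is)); pose proof (Hrpos s Is).
    destruct (nut s) as [n1 n2]; unfold vscal, vsub, vadd; simpl; f_equal; field; lra. }
  assert (Hinv : ex_derive (fun s => / r s) t) by (auto_derive; repeat split; auto; lra).
  destruct Hdiff as [D1 D2]; split.
  - apply ex_derive_ext_loc with (fun s => / r s * fst (vsub (f s) (a s))).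
    + apply filter_imp with (2 := Hloc); intros s ->; reflexivity.
    + apply ex_derive_mult; assumption.
  - apply ex_derive_ext_loc with (fun s => / r s * snd (vsub (f s) (a s))).
    + apply filter_imp with (2 := Hloc); intros s ->; reflexivity.
    + apply ex_derive_mult; assumption.
Qed.

Lemma continuity_pt_frame_coord (m : R -> vec) c t : smooth_vec_on I m -> I t ->
  continuity_pt (fun s => c * mink (nut s) (m s)) t.
Proof.
  intros Hm It; apply derivable_continuous_pt, ex_derive_Reals_0.
  apply ex_derive_mult; [apply ex_derive_const |].
  apply ex_derive_mink; [apply nut_ex_vderive | eapply smooth_vec_on_ex_vderive]; eauto.
Qed.

Lemma envelope_same_causal_character : sigma = e ->
  exists (theta : R -> R) (e1 e2 : R), (e1 = 1 \/ e1 = -1) /\ (e2 = 1 \/ e2 = -1) /\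
    (forall t, I t ->
       nut t = vadd (vscal (e1 * cosh (theta t)) (mu t)) (vscal (e2 * sinh (theta t)) (nu t))) /\
    ((forall t, I t -> Derive r t + beta a mu t * cosh (theta t) = 0) \/
     (forall t, I t -> Derive r t - beta a mu t * cosh (theta t) = 0)).
Proof.
  intros Hsigma.
  destruct (ointerval_hyperbolic_angle lo hi mu_coord nu_coord) as [theta [s [Hs Hangle]]].
  - intros t It; exact (continuity_pt_frame_coord mu e t Hmu It).
  - intros t It; pose proof (nut_coord_norm t It) as Hn.
    rewrite Hsigma in Hn; destruct He as [He' | He']; rewrite He' in Hn; lra.
  - exists theta, s, 1; split; [exact Hs|]; split; [now left|]; split.
    + intros t It; rewrite (nut_frame_decomp t It).
      destruct (Hangle t It) as [-> ->]; repeat f_equal; ring.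
    + destruct Hs as [-> | ->]; [left | right]; intros t It;
        pose proof (radius_derive_mu_coord t It) as Hd;
        rewrite Hsigma, (proj1 (Hangle t It)) in Hd;
        destruct He as [He' | He']; rewrite He' in Hd; lra.
Qed.

Lemma envelope_opposite_causal_character : sigma = - e ->
  exists (theta : R -> R) (e2 : R), (e2 = 1 \/ e2 = -1) /\
    (forall t, I t ->
       nut t = vadd (vscal (sinh (theta t)) (mu t)) (vscal (e2 * cosh (theta t)) (nu t))) /\
    (forall t, I t -> Derive r t - beta a mu t * sinh (theta t) = 0).
Proof.
  intros Hsigma.
  destruct (ointerval_hyperbolic_angle lo hi nu_coord mu_coord) as [theta [s [Hs Hangle]]].
  - intros t It; exact (continuity_pt_frame_coord nu (- e) t Hnu It).
  - intros t It; pose proof (nut_coord_norm t It) as Hn.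
    rewrite Hsigma in Hn; destruct He as [He' | He']; rewrite He' in Hn; lra.
  - exists theta, s; split; [exact Hs|]; split.
    + intros t It; rewrite (nut_frame_decomp t It).
      destruct (Hangle t It) as [-> ->]; reflexivity.
    + intros t It; pose proof (radius_derive_mu_coord t It) as Hd.
      rewrite Hsigma, (proj2 (Hangle t It)) in Hd.
      destruct He as [He' | He']; rewrite He' in Hd; lra.
Qed.

End PseudoCircleEnvelope.

Theorem theorem2 (lo hi : Rbar) (a nu mu : R -> vec) (r : R -> R)
  (sigma : R) (f nut : R -> vec) :
  Rbar_lt lo hi ->
  (* a is a frontal with Gauss map nu and unit tangent field mu *)
  smooth_vec_on (ointerval lo hi) a ->
  smooth_vec_on (ointerval lo hi) nu ->
  smooth_vec_on (ointerval lo hi) mu ->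
  ((forall t, ointerval lo hi t -> mink (nu t) (nu t) = -1 /\ mink (mu t) (mu t) = 1)
   \/ (forall t, ointerval lo hi t -> mink (nu t) (nu t) = 1 /\ mink (mu t) (mu t) = -1)) ->
  (forall t, ointerval lo hi t ->
     mink (vderiv a t) (nu t) = 0 /\ mink (mu t) (nu t) = 0) ->
  (* r smooth positive *)
  smooth_on (ointerval lo hi) r ->
  (forall t, ointerval lo hi t -> 0 < r t) ->
  (* f is an envelope of C_(a(t), sigma r(t)), sigma = +1 or -1 *)
  (sigma = 1 \/ sigma = -1) ->
  smooth_vec_on (ointerval lo hi) f ->
  (forall t, ointerval lo hi t ->
     mink (vsub (f t) (a t)) (vsub (f t) (a t)) = sigma * (r t) ^ 2 /\
     mink (vderiv f t) (vsub (f t) (a t)) = 0) ->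
  (* f = a + r nut with nut into S^1_1 (sigma = 1) or H^1 (sigma = -1) *)
  (forall t, ointerval lo hi t ->
     f t = vadd (a t) (vscal (r t) (nut t)) /\ mink (nut t) (nut t) = sigma) ->
  ((forall t, ointerval lo hi t -> causal_sign (nut t) * causal_sign (mu t) = 1) ->
   exists (theta : R -> R) (e1 e2 : R),
     (e1 = 1 \/ e1 = -1) /\ (e2 = 1 \/ e2 = -1) /\
     (forall t, ointerval lo hi t ->
        nut t = vadd (vscal (e1 * cosh (theta t)) (mu t))
                     (vscal (e2 * sinh (theta t)) (nu t))) /\
     ((forall t, ointerval lo hi t ->
         Derive r t + beta a mu t * cosh (theta t) = 0) \/
      (forall t, ointerval lo hi t ->
         Derive r t - beta a mu t * cosh (theta t) = 0)))
  /\
  ((forall t, ointerval lo hi t -> causal_sign (nut t) * causal_sign (mu t) = -1) ->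
   exists (theta : R -> R) (e2 : R),
     (e2 = 1 \/ e2 = -1) /\
     (forall t, ointerval lo hi t ->
        nut t = vadd (vscal (sinh (theta t)) (mu t))
                     (vscal (e2 * cosh (theta t)) (nu t))) /\
     (forall t, ointerval lo hi t ->
        Derive r t - beta a mu t * sinh (theta t) = 0)).
Proof.
  intros Hlt Ha Hnu Hmu Hunit Hfrontal Hr Hrpos Hsigma Hf Henv Hnut.
  assert (Hframe : exists e, (e = 1 \/ e = -1) /\ forall t, ointerval lo hi t ->
            mink (mu t) (mu t) = e /\ mink (nu t) (nu t) = - e).
  { destruct Hunit as [H | H]; [exists 1 | exists (-1)];
      split; auto; intros t It; destruct (H t It); split; lra. }
  destruct Hframe as [e [He Hframe]].
  destruct (ointerval_inhabited lo hi Hlt) as [t0 It0].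
  assert (Hparity : causal_sign (nut t0) * causal_sign (mu t0) = sigma * e).
  { rewrite (causal_sign_unit sigma), (causal_sign_unit e);
      [reflexivity | assumption | apply Hframe | assumption | apply Hnut]; assumption. }
  split; intros Hc; rewrite (Hc t0 It0) in Hparity.
  - apply (envelope_same_causal_character lo hi a nu mu f nut r e sigma); auto.
    destruct He, Hsigma; subst; lra.
  - apply (envelope_opposite_causal_character lo hi a nu mu f nut r e sigma); auto.
    destruct He, Hsigma; subst; lra.
Qed.
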